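(* Let $J,J'\subset\mathbb S$ with $\delta(J)=J$ and $\delta(J')=J'$. Let $y\in\tilde W$ and $\alpha\in\Sigma$, with reflection $s_\alpha\in W$. If there exist $w,w'\in W$ such that $w^{-1}y\delta(s_\alpha)\delta(w)\in\tilde W_J$ and $w'^{-1}y\delta(w')\in\tilde W_{J'}$, then $w^{-1}(\alpha)\in\Sigma_J$ or $w'^{-1}(\alpha)\in\Sigma_{J'}$.
   Context: Let $\tilde W=X_*(T)_\Gamma\rtimes W$ be the Iwahori–Weyl group of a quasi-split connected semisimple group $G$ over a local field $F$ (finite extension of $\mathbb Q_p$ or $\mathbb F_q((\epsilon))$) split over a tamely ramified extension, relative to a maximal $L$-split torus $S$ defined over $F$ with centralizer $T$, where $L$ is the completion of the maximal unramified extension of $F$ and $\Gamma=\mathrm{Gal}(\bar L/L)$. $\delta$ is the automorphism of $\tilde W$ and $W$ induced by the Frobenius of $L/F$. $\Sigma$ is the reduced root system on $X_*(T)_\Gamma\otimes\mathbb R$ whose affine roots are $v\mapsto\langle a,v\rangle+k$, $a\in\Sigma$, $k\in\mathbb Z$, with $W=W(\Sigma)$; $\mathbb S$ a set of simple roots (simple reflections) of $\Sigma$; for $J\subset\mathbb S$, $\Sigma_J$ is the set of roots spanned by $J$, $W_J$ the parabolic subgroup, $\tilde W_J=X_*(T)_\Gamma\rtimes W_J$. *)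

From HB Require Import structures.
From mathcomp Require Import all_boot all_order all_algebra.
Set Implicit Arguments. Unset Strict Implicit. Unset Printing Implicit Defensive.
Import Order.TTheory GRing.Theory Num.Theory.
Local Open Scope ring_scope.

Section RootData.
Variables (R : realFieldType) (n : nat).
Local Notation V := 'cV[R]_n.
Local Notation M := 'M[R]_n.

Definition dot (u v : V) : R := (u^T *m v) 0 0.

Definition refl (a : V) : M := 1%:M - (2 / dot a a) *: (a *m a^T).

Definition in_span (J : seq V) (v : V) : Prop :=
  exists c : V -> R, v = \sum_(a <- J) c a *: a.

Definition root_system (Sigma : seq V) : Prop :=
  [/\ 0 \notin Sigma,
      (forall v, in_span Sigma v),
      (forall a b, a \in Sigma -> b \in Sigma -> refl a *m b \in Sigma) &
      (forall a b, a \in Sigma -> b \in Sigma ->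
         exists k : int, 2 * dot b a / dot a a = k%:~R)].

Definition reduced (Sigma : seq V) : Prop :=
  forall a (c : R), a \in Sigma -> c *: a \in Sigma -> c = 1 \/ c = -1.

Definition is_base (Sigma S : seq V) : Prop :=
  [/\ uniq S, {subset S <= Sigma},
      (forall c : V -> R, \sum_(a <- S) c a *: a = 0 -> forall a, a \in S -> c a = 0) &
      (forall b, b \in Sigma -> exists c : V -> int,
          ((forall a, (0 <= c a)%R) \/ (forall a, (c a <= 0)%R)) /\
          b = \sum_(a <- S) (c a)%:~R *: a)].

Inductive gen (G : seq M) : M -> Prop :=
| gen_1 : gen G 1%:M
| gen_M g x : g \in G -> gen G x -> gen G (g *m x).

(* Weyl group W = W(Sigma), and parabolic subgroup W_J *)
Definition weyl (Sigma : seq V) : M -> Prop := gen [seq refl a | a <- Sigma].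

Definition rootsJ (Sigma J : seq V) (b : V) : Prop := b \in Sigma /\ in_span J b.

(* Frobenius: linear automorphism d of V preserving Sigma and the base S;
   it acts on W by conjugation *)
Definition frob (Sigma S : seq V) (d : M) : Prop :=
  [/\ d \in unitmx, (forall a, a \in Sigma -> d *m a \in Sigma) &
      (forall a, a \in S -> d *m a \in S)].

Definition deltaW (d w : M) : M := d *m w *m invmx d.

Definition dstable (d : M) (J : seq V) : Prop :=
  (forall a, a \in J -> d *m a \in J) /\
  (forall b, b \in J -> exists2 a, a \in J & b = d *m a).

(* Iwahori-Weyl group  X ⋊ W, elements are pairs (lambda, w) *)
Section Semidirect.
Variables (X : zmodType) (actX : M -> X -> X) (deltaX : X -> X).

Definition Wt := (X * M)%type.
Definition mulWt (x y : Wt) : Wt := (x.1 + actX x.2 y.1, x.2 *m y.2).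
Definition ofW (w : M) : Wt := (0, w).
Definition deltaWt (d : M) (x : Wt) : Wt := (deltaX x.1, deltaW d x.2).

Definition iw_data (Sigma : seq V) (d : M) : Prop :=
  [/\ (forall w l m, weyl Sigma w -> actX w (l + m) = actX w l + actX w m),
      (forall l, actX 1%:M l = l),
      (forall w1 w2 l, weyl Sigma w1 -> weyl Sigma w2 ->
          actX (w1 *m w2) l = actX w1 (actX w2 l)),
      (forall l m, deltaX (l + m) = deltaX l + deltaX m) &
      bijective deltaX] /\
  (forall w l, weyl Sigma w -> deltaX (actX w l) = actX (deltaW d w) (deltaX l)).

(* membership in tilde W_J = X ⋊ W_J *)
Definition inWtJ (J : seq V) (x : Wt) : Prop := weyl J x.2.
End Semidirect.
End RootData.

(* Only the W-components matter, as tilde W_J = X ⋊ W_J.  Let z be a point of the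
   fundamental chamber lying exactly on the walls of J and fixed by delta.  The first
   hypothesis makes v := w z a fixed point of y delta s_alpha.  The sum ht' of the simple
   coordinates outside J' is invariant under W_J' and delta, so the second hypothesis
   gives ht'(w'^-1 s_alpha v) = ht'(w'^-1 v), that is <alpha, v> ht'(w'^-1 alpha) = 0.
   Hence either w^-1 alpha is orthogonal to z or its coordinates outside J' vanish;
   since the simple coordinates of a root all have the same sign, w^-1 alpha then lies
   in the span of J, resp. of J'. *)

From HB Require Import structures.
From mathcomp Require Import all_boot all_order all_algebra.
From Stdlib Require Import ClassicalEpsilon.
From mathcomp Require Import ring lra.
Set Implicit Arguments. Unset Strict Implicit. Unset Printing Implicit Defensive.
Import Order.TTheory GRing.Theory Num.Theory.
Local Open Scope ring_scope.

Section InnerProduct.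
Variables (R : realFieldType) (n : nat).
Local Notation V := 'cV[R]_n.
Local Notation M := 'M[R]_n.
Implicit Types (u v a b : V) (g x : M).

Lemma dotE u v : dot u v = \sum_i u i 0 * v i 0.
Proof. by rewrite /dot !mxE; apply: eq_bigr => i _; rewrite mxE. Qed.

Lemma dotC u v : dot u v = dot v u.
Proof. by rewrite !dotE; apply: eq_bigr => i _; rewrite mulrC. Qed.

Lemma dotDr u v w : dot u (v + w) = dot u v + dot u w.
Proof. by rewrite !dotE -big_split; apply: eq_bigr => i _; rewrite mxE mulrDr. Qed.

Lemma dotZr u k v : dot u (k *: v) = k * dot u v.
Proof. by rewrite !dotE mulr_sumr; apply: eq_bigr => i _; rewrite mxE mulrCA. Qed.

Lemma dotBr u v w : dot u (v - w) = dot u v - dot u w.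
Proof. by rewrite -scaleN1r dotDr dotZr mulN1r. Qed.

Lemma dotl_lin v : linear_for *%R (fun u : V => dot u v).
Proof. by move=> k u u'; rewrite /= ![dot _ v]dotC dotDr dotZr. Qed.

Lemma dot_sumr (I : Type) (s : seq I) (F : I -> V) u :
  dot u (\sum_(i <- s) F i) = \sum_(i <- s) dot u (F i).
Proof.
elim: s => [|x s IH]; last by rewrite !big_cons dotDr IH.
by rewrite !big_nil -(scale0r (0 : V)) dotZr mul0r.
Qed.

Lemma dot_gt0 u : u != 0 -> 0 < dot u u.
Proof.
move=> nz_u; rewrite dotE lt0r sumr_ge0 ?andbT => [|i _]; last first.
  by rewrite -expr2 sqr_ge0.
apply: contra nz_u => /eqP sum0; apply/eqP/matrixP => i j.
rewrite (ord1 j) mxE; apply/eqP; rewrite -sqrf_eq0.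
have sq0 : \sum_(k < n) u k 0 ^+ 2 = 0.
  by rewrite -[RHS]sum0; apply: eq_bigr => k _; rewrite expr2.
by rewrite (psumr_eq0P (P := predT) (fun k _ => sqr_ge0 (u k 0)) sq0 (i := i) isT).
Qed.

Lemma reflE a v : refl a *m v = v - (2 / dot a a * dot a v) *: a.
Proof.
rewrite /refl mulmxBl mul1mx -scalemxAl -mulmxA [a^T *m v]mx11_scalar.
by rewrite mul_mx_scalar scalerA.
Qed.

Lemma refl_fixed a v : dot a v = 0 -> refl a *m v = v.
Proof. by move=> av0; rewrite reflE av0 mulr0 scale0r subr0. Qed.

Lemma refl_dot a u v : dot a a != 0 -> dot (refl a *m u) (refl a *m v) = dot u v.
Proof.
move=> nz; rewrite !reflE dotBr ![dot (_ - _) _]dotC !dotBr !dotZr.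
rewrite ![dot (_ *: _) _]dotC !dotZr [dot v u]dotC [dot v a]dotC [dot u a]dotC.
by field.
Qed.

Lemma refl_unit a : dot a a != 0 -> refl a \in unitmx.
Proof.
move=> nz; suff reflK : refl a *m refl a = 1%:M by case: (mulmx1_unit reflK).
rewrite /refl mulmxBl mul1mx mulmxBr mulmx1 -!scalemxAl -!scalemxAr.
rewrite -[(a *m a^T) *m (a *m a^T)]mulmxA [a^T *m (a *m a^T)]mulmxA.
rewrite [a^T *m a]mx11_scalar mul_scalar_mx -scalemxAr !scalerA.
have -> : 2 / dot a a * (2 / dot a a * (a^T *m a) 0 0) = 2 / dot a a + 2 / dot a a.
  by rewrite -/(dot a a); field.
by rewrite scalerDl opprB addrK subrK.
Qed.

Lemma gen_unit (G : seq V) x : (forall a, a \in G -> dot a a != 0) ->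
  gen [seq refl a | a <- G] x -> x \in unitmx.
Proof.
move=> nzG; elim=> [|_ y /mapP[a aG ->] _ yu]; first exact: unitmx1.
by rewrite unitmx_mul refl_unit ?nzG.
Qed.

Lemma gen_dot (G : seq V) x : (forall a, a \in G -> dot a a != 0) ->
  gen [seq refl a | a <- G] x -> forall u v, dot (x *m u) (x *m v) = dot u v.
Proof.
move=> nzG; elim=> [|_ y /mapP[a aG ->] _ IH] u v; first by rewrite !mul1mx.
by rewrite -!mulmxA refl_dot ?nzG.
Qed.

Lemma gen_fixed (G : seq M) x v :
  (forall g, g \in G -> g *m v = v) -> gen G x -> x *m v = v.
Proof.
move=> fixG; elim=> [|g y gG _ yv]; first by rewrite mul1mx.
by rewrite -mulmxA yv fixG.
Qed.

Lemma gen_invariant (T : Type) (f : V -> T) (G : seq M) x :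
  (forall g v, g \in G -> f (g *m v) = f v) -> gen G x -> forall v, f (x *m v) = f v.
Proof.
move=> fG; elim=> [|g y gG _ IH] v; first by rewrite mul1mx.
by rewrite -mulmxA fG.
Qed.

Lemma perm_map_mx g (s : seq V) : g \in unitmx -> uniq s ->
  (forall v, v \in s -> g *m v \in s) -> perm_eq [seq g *m v | v <- s] s.
Proof.
move=> gu us gs; have g_inj : injective (fun v : V => g *m v) := can_inj (mulKmx gu).
have us' : uniq [seq g *m v | v <- s] by rewrite (map_inj_uniq g_inj).
have sub : {subset [seq g *m v | v <- s] <= s} by move=> _ /mapP[v vs ->]; exact: gs.
have [_ eq_s] := uniq_min_size us' sub (eq_leq (esym (size_map _ _))).
exact: uniq_perm.
Qed.

Lemma reindex_mx (T : nmodType) g (s : seq V) (F : V -> T) : g \in unitmx -> uniq s ->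
  (forall v, v \in s -> g *m v \in s) ->
  \sum_(v <- s) F v = \sum_(v <- s) F (g *m v).
Proof. by move=> gu us gs; rewrite -(perm_big _ (perm_map_mx gu us gs)) big_map. Qed.

Lemma invmx_stable g (s : seq V) : g \in unitmx ->
  (forall v, v \in s -> g *m v \in s) -> forall v, v \in s -> invmx g *m v \in s.
Proof.
move=> gu gs v vs; have gs' v' : v' \in undup s -> g *m v' \in undup s.
  by rewrite !mem_undup; exact: gs.
have : v \in [seq g *m v' | v' <- undup s].
  by rewrite (perm_mem (perm_map_mx gu (undup_uniq s) gs')) mem_undup.
by case/mapP=> v' v's ->; rewrite mulKmx // -mem_undup.
Qed.

Lemma dstable_mem (d : M) K a : d \in unitmx -> dstable d K -> (d *m a \in K) = (a \in K).
Proof.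
move=> du [dK dK']; apply/idP/idP => [/dK'[a' a'K /(can_inj (mulKmx du)) -> //]|].
exact: dK.
Qed.

End InnerProduct.

Section Span.
Variables (R : realFieldType) (n : nat).
Local Notation V := 'cV[R]_n.
Implicit Types (K : seq V) (u v a : V).

Lemma in_span0 K : in_span K 0.
Proof. by exists (fun _ => 0); rewrite big1 // => a _; rewrite scale0r. Qed.

Lemma in_spanD K u v : in_span K u -> in_span K v -> in_span K (u + v).
Proof.
move=> [cu ->] [cv ->]; exists (fun a => cu a + cv a).
by rewrite -big_split; apply: eq_bigr => a _; rewrite scalerDl.
Qed.

Lemma in_spanZ K k v : in_span K v -> in_span K (k *: v).
Proof.
move=> [c ->]; exists (fun a => k * c a).
by rewrite scaler_sumr; apply: eq_bigr => a _; rewrite scalerA.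
Qed.

Lemma in_span_sum K (I : Type) (s : seq I) (P : pred I) (F : I -> V) :
  (forall i, P i -> in_span K (F i)) -> in_span K (\sum_(i <- s | P i) F i).
Proof. by move=> spanF; apply: big_ind => //; [exact: in_span0 | exact: in_spanD]. Qed.

Lemma in_span_mem K a : a \in K -> in_span K a.
Proof.
move=> aK; have cnt_gt0 : (0 < count_mem a K)%N by rewrite -has_count has_pred1.
exists (fun b => (b == a)%:R / (count_mem a K)%:R).
rewrite (eq_bigr (fun b => (b == a)%:R *: ((count_mem a K)%:R^-1 *: a))); last first.
  by move=> b _; rewrite scalerA; case: eqP => [->|]; rewrite ?mul0r ?scale0r.
rewrite -scaler_suml.
have -> : \sum_(b <- K) (b == a)%:R = (count_mem a K)%:R :> R.
  by rewrite -sum1_count natr_sum [RHS]big_mkcond; apply: eq_bigr => b _ /=; case: eqP.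
by rewrite scalerA mulfV ?scale1r // pnatr_eq0 -lt0n.
Qed.

End Span.

Section LinearForm.
Variables (R : realFieldType) (n : nat).
Local Notation V := 'cV[R]_n.
Variable g : V -> R.
Hypothesis g_lin : linear_for *%R g.

Lemma lin_form_sum (I : Type) (s : seq I) (c : I -> R) (F : I -> V) :
  g (\sum_(i <- s) c i *: F i) = \sum_(i <- s) c i * g (F i).
Proof.
elim: s => [|i s IH]; last by rewrite !big_cons g_lin IH.
have := g_lin 1 0 0; rewrite scaler0 addr0 mul1r !big_nil => g00; lra.
Qed.

Lemma coherent_in_span (S K : seq V) (c : V -> int) b :
  ((forall a, (0 <= c a)%R) \/ (forall a, (c a <= 0)%R)) ->
  b = \sum_(a <- S) (c a)%:~R *: a ->
  (forall a, a \in S -> 0 <= g a) -> (forall a, a \in S -> a \notin K -> 0 < g a) ->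
  g b = 0 -> in_span K b.
Proof.
move=> c_sign -> g_ge0 g_gt0; rewrite lin_form_sum.
have [e e_nz ec_ge0] : exists2 e : R, e != 0 & forall a, 0 <= e * (c a)%:~R.
  case: c_sign => c_sign; [exists 1 | exists (-1)]; rewrite ?oppr_eq0 ?oner_eq0 // => a.
    by rewrite mul1r ler0z.
  by rewrite mulN1r oppr_ge0 lerz0.
move=> /(congr1 (fun x => e * x)); rewrite mulr0 mulr_sumr big_seq => /eqP.
rewrite psumr_eq0 => [/allP term0|a aS]; last by rewrite mulrA mulr_ge0 ?g_ge0.
have c0 a : a \in S -> a \notin K -> c a = 0.
  move=> aS aK; have /eqP := term0 a aS; rewrite aS mulrA /= mulf_eq0.
  by rewrite (gt_eqF (g_gt0 a aS aK)) orbF mulf_eq0 (negPf e_nz) intr_eq0 => /eqP/eqP.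
rewrite (bigID (mem K) xpredT) /= [X in _ + X]big1_seq ?addr0; last first.
  by move=> a /andP[aK aS]; rewrite c0 // scale0r.
by apply: in_span_sum => a aK; apply/in_spanZ/in_span_mem.
Qed.

Lemma lin_form_refl (m : 'M[R]_n) a v : dot a a != 0 ->
  g (m *m (refl a *m v)) = g (m *m v) -> dot a v = 0 \/ g (m *m a) = 0.
Proof.
move=> aa_nz; rewrite reflE mulmxBr -scalemxAr -scaleNr addrC g_lin.
move=> /(congr1 (fun x => x - g (m *m v))); rewrite addrK subrr => /eqP.
rewrite mulf_eq0 oppr_eq0 !mulf_eq0 invr_eq0 (negPf aa_nz) pnatr_eq0 /=.
by case/orP => /eqP; [left | right].
Qed.

End LinearForm.

Section Coordinates.
Variables (R : realFieldType) (n : nat).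
Local Notation V := 'cV[R]_n.
Local Notation M := 'M[R]_n.
Variable S : seq V.
Hypothesis S_uniq : uniq S.
Hypothesis S_free : forall c : V -> R, \sum_(a <- S) c a *: a = 0 -> forall a, a \in S -> c a = 0.
Hypothesis S_span : forall v : V, in_span S v.
Implicit Types (K : seq V) (u v : V).

Definition coord (v : V) : V -> R :=
  proj1_sig (constructive_indefinite_description _ (S_span v)).

Lemma coordE v : v = \sum_(a <- S) coord v a *: a.
Proof. exact: (proj2_sig (constructive_indefinite_description _ (S_span v))). Qed.

Lemma coord_sum c a : a \in S -> coord (\sum_(b <- S) c b *: b) a = c a.
Proof.
move=> aS; apply/eqP; rewrite -subr_eq0; apply/eqP.
apply: (S_free (c := fun b => coord (\sum_(b <- S) c b *: b) b - c b)) => //.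
under eq_bigr do rewrite scalerBl.
by rewrite sumrB -coordE subrr.
Qed.

Definition heightC (K : seq V) (v : V) : R :=
  \sum_(a <- S) (if a \in K then 0 else coord v a).

Lemma heightC_sum K c :
  heightC K (\sum_(a <- S) c a *: a) = \sum_(a <- S) (if a \in K then 0 else c a).
Proof. by apply: eq_big_seq => a aS; rewrite coord_sum. Qed.

Lemma heightC_lin K : linear_for *%R (heightC K).
Proof.
move=> k u v; have -> : k *: u + v = \sum_(a <- S) (k * coord u a + coord v a) *: a.
  rewrite [in LHS](coordE u) [in LHS](coordE v) scaler_sumr -big_split.
  by apply: eq_bigr => a _; rewrite scalerDl scalerA.
rewrite heightC_sum /heightC mulr_sumr -big_split; apply: eq_bigr => a _ /=.
by case: (a \in K); rewrite ?mulr0 ?addr0.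
Qed.

Lemma heightC_simple K a : a \in S -> heightC K a = (a \notin K)%:R.
Proof.
move=> aS; have Ea : a = \sum_(b <- S) (b == a)%:R *: b.
  rewrite (bigD1_seq a) //= eqxx scale1r big1 ?addr0 // => b /negPf ->.
  by rewrite scale0r.
rewrite {1}Ea heightC_sum (bigD1_seq a) //= eqxx big1 ?addr0 => [|b /negPf ->].
  by case: (a \in K).
by case: (b \in K).
Qed.

Lemma heightC_weyl K x : {subset K <= S} -> weyl K x ->
  forall v, heightC K (x *m v) = heightC K v.
Proof.
move=> KS; apply: gen_invariant => _ v /mapP[a aK ->].
by rewrite reflE -scaleNr addrC heightC_lin heightC_simple ?KS // aK mulr0 add0r.
Qed.

Lemma heightC_perm K (d : M) : d \in unitmx -> (forall a, a \in S -> d *m a \in S) ->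
  (forall a, a \in S -> (d *m a \in K) = (a \in K)) ->
  forall v, heightC K (d *m v) = heightC K v.
Proof.
move=> du dS dK v; pose c b := coord v (invmx d *m b).
have -> : d *m v = \sum_(b <- S) c b *: b.
  rewrite [in LHS](coordE v) mulmx_sumr (reindex_mx (fun b => c b *: b) du S_uniq dS).
  by apply: eq_bigr => a _; rewrite -scalemxAr /c mulKmx.
rewrite heightC_sum [RHS]/heightC (reindex_mx _ du S_uniq dS).
by apply: eq_big_seq => a aS; rewrite dK // /c mulKmx.
Qed.

End Coordinates.

Section DualVector.
Variables (R : realFieldType) (n : nat).
Local Notation V := 'cV[R]_n.
Local Notation M := 'M[R]_n.
Variable Sigma : seq V.
Hypothesis Sigma_refl : forall a b, a \in Sigma -> b \in Sigma -> refl a *m b \in Sigma.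
Hypothesis Sigma_gt0 : forall a, a \in Sigma -> 0 < dot a a.
Variable f : V -> R.
Hypothesis f_lin : linear_for *%R f.

Definition dual_vec : V := \sum_(b <- undup Sigma) f b *: b.

Lemma dual_vec_fixed (g : M) : g \in unitmx ->
  (forall b, b \in Sigma -> g *m b \in Sigma) ->
  (forall b, b \in Sigma -> f (g *m b) = f b) -> g *m dual_vec = dual_vec.
Proof.
move=> gu gSigma gf; have gS v : v \in undup Sigma -> g *m v \in undup Sigma.
  by rewrite !mem_undup; exact: gSigma.
rewrite /dual_vec mulmx_sumr (reindex_mx (fun b => f b *: b) gu (undup_uniq _) gS).
by apply: eq_big_seq => b; rewrite mem_undup => bS; rewrite scalemxAr gf.
Qed.

(* Reindexing by [refl a] rewrites [\sum_b f b * dot a b] as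
   [\sum_b (f b - k_b * f a) * - dot a b] with [k_b = 2 dot a b / dot a a];
   adding the two expressions leaves [f a] times a positive sum. *)
Lemma dot_dual_vec a : a \in Sigma ->
  exists2 c, 0 < c & dot a dual_vec = f a * c.
Proof.
move=> aS; have aa_gt0 := Sigma_gt0 aS; have aa_nz := gt_eqF aa_gt0.
have aS' v : v \in undup Sigma -> refl a *m v \in undup Sigma.
  by rewrite !mem_undup; exact: Sigma_refl.
have E1 : dot a dual_vec = \sum_(b <- undup Sigma) f b * dot a b.
  by rewrite /dual_vec dot_sumr; apply: eq_bigr => b _; rewrite dotZr mulrC.
have E2 : dot a dual_vec = \sum_(b <- undup Sigma)
    (f b - 2 / dot a a * dot a b * f a) * - dot a b.
  rewrite E1 (reindex_mx _ (refl_unit (negbT aa_nz)) (undup_uniq _) aS').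
  apply: eq_bigr => b _; rewrite reflE -scaleNr addrC f_lin dotDr dotZr.
  by field; rewrite aa_nz.
exists (\sum_(b <- undup Sigma) dot a b ^+ 2 / dot a a).
  rewrite (bigD1_seq a) ?mem_undup ?undup_uniq //=.
  rewrite ltr_wpDr ?sumr_ge0 // => [b _|]; first by rewrite divr_ge0 ?sqr_ge0 ?ltW.
  by rewrite expr2 mulfK ?aa_nz.
have -> : dot a dual_vec = (dot a dual_vec + dot a dual_vec) / 2 by field.
rewrite {1}E1 E2 -big_split mulr_sumr mulr_suml; apply: eq_bigr => b _ /=.
by field; rewrite aa_nz.
Qed.
End DualVector.

Section RootSystem.
Variables (R : realFieldType) (n : nat).
Local Notation V := 'cV[R]_n.
Local Notation M := 'M[R]_n.
Variables (Sigma S : seq V).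
Hypothesis Sigma_rs : root_system Sigma.
Implicit Types (x : M) (u v a b : V).

Lemma root_dot_gt0 a : a \in Sigma -> 0 < dot a a.
Proof.
case: Sigma_rs => Sigma_nz0 _ _ _ aS; apply: dot_gt0.
by apply: contraNneq Sigma_nz0 => <-.
Qed.

Lemma root_dot_neq0 a : a \in Sigma -> dot a a != 0.
Proof. by move/root_dot_gt0/gt_eqF/negbT. Qed.

Lemma weyl_unit x : weyl Sigma x -> x \in unitmx.
Proof. exact: gen_unit root_dot_neq0. Qed.

Lemma weyl_dot x u v : weyl Sigma x -> dot (x *m u) (x *m v) = dot u v.
Proof. by move/(gen_dot root_dot_neq0). Qed.

Lemma weyl_root x b : weyl Sigma x -> b \in Sigma -> x *m b \in Sigma.
Proof.
case: Sigma_rs => _ _ Sigma_refl _ Wx.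
elim: Wx b => [|_ y /mapP[a aS ->] _ IH] b bS; first by rewrite mul1mx.
by rewrite -mulmxA Sigma_refl ?IH.
Qed.

Lemma weyl_rootV x b : weyl Sigma x -> b \in Sigma -> invmx x *m b \in Sigma.
Proof. by move=> Wx; apply: (invmx_stable (weyl_unit Wx)) => v; apply: weyl_root. Qed.

Hypothesis S_base : is_base Sigma S.

Lemma base_span v : in_span S v.
Proof.
have [_ Sigma_span _ _] := Sigma_rs; have [c ->] := Sigma_span v.
case: S_base => _ _ _ S_expand.
rewrite big_seq; apply: in_span_sum => b bS; apply: in_spanZ.
by have [e [_ ->]] := S_expand b bS; exists (fun a => (e a)%:~R).
Qed.

Lemma root_in_span_ker (g : V -> R) (K : seq V) b : linear_for *%R g ->
  (forall a, a \in S -> 0 <= g a) -> (forall a, a \in S -> a \notin K -> 0 < g a) ->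
  b \in Sigma -> g b = 0 -> in_span K b.
Proof.
move=> g_lin g_ge0 g_gt0 bS; case: S_base => _ _ _ /(_ b bS)[c [c_sign Eb]].
exact: coherent_in_span g_lin S K c b c_sign Eb g_ge0 g_gt0.
Qed.

End RootSystem.

Section ChamberVector.
Variables (R : realFieldType) (n : nat).
Local Notation V := 'cV[R]_n.
Local Notation M := 'M[R]_n.
Variables (Sigma S J : seq V).
Hypotheses (Sigma_rs : root_system Sigma) (S_base : is_base Sigma S).
Hypothesis JS : {subset J <= S}.

(* A point of the fundamental chamber lying exactly on the walls of [J]; building it
   from [Sigma] rather than from fundamental coweights makes it [d]-invariant although
   [d] need not be orthogonal. *)
Definition chamber_vec : V := dual_vec Sigma (heightC (base_span Sigma_rs S_base) J).

Lemma chamber_dot_simple a : a \in S ->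
  exists2 c, 0 < c & dot a chamber_vec = (a \notin J)%:R * c.
Proof.
move=> aS; have [S_uniq S_sub S_free _] := S_base.
have [_ _ Sigma_refl _] := Sigma_rs.
have [c c_gt0 ->] := dot_dual_vec Sigma_refl (root_dot_gt0 Sigma_rs)
  (heightC_lin S_free (base_span Sigma_rs S_base) J) (S_sub a aS).
by exists c; rewrite // heightC_simple.
Qed.

Lemma root_heightC_eq0 K b : b \in Sigma ->
  heightC (base_span Sigma_rs S_base) K b = 0 -> in_span K b.
Proof.
have [S_uniq _ S_free _] := S_base.
apply: (root_in_span_ker S_base (heightC_lin S_free _ K)) => a aS.
  by rewrite heightC_simple // ler0n.
by move=> aK; rewrite heightC_simple // aK ltr01.
Qed.

Lemma root_orth_chamber b : b \in Sigma -> dot b chamber_vec = 0 -> in_span J b.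
Proof.
apply: (root_in_span_ker S_base (dotl_lin chamber_vec)) => a aS.
  by have [c c_gt0 ->] := chamber_dot_simple aS; rewrite mulr_ge0 ?ler0n ?ltW.
by move=> aJ; have [c c_gt0 ->] := chamber_dot_simple aS; rewrite aJ mul1r.
Qed.

Lemma chamber_weyl_fixed x : weyl J x -> x *m chamber_vec = chamber_vec.
Proof.
apply: gen_fixed => _ /mapP[a aJ ->]; apply: refl_fixed.
by have [c _ ->] := chamber_dot_simple (JS aJ); rewrite aJ mul0r.
Qed.

Lemma chamber_frob_fixed (d : M) : frob Sigma S d -> dstable d J ->
  d *m chamber_vec = chamber_vec.
Proof.
move=> [du dSigma dS] dJ; have [S_uniq _ S_free _] := S_base.
apply: dual_vec_fixed => // b _.
by apply: heightC_perm => // a _; apply: dstable_mem.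
Qed.

End ChamberVector.

Section TwistedConjugation.
Variables (R : realFieldType) (n : nat).
Local Notation V := 'cV[R]_n.
Local Notation M := 'M[R]_n.
Variables (d w Z : M).
Hypotheses (du : d \in unitmx) (wu : w \in unitmx).

Lemma deltaW_mulmx s : deltaW d s *m d = d *m s.
Proof. by rewrite /deltaW -mulmxA mulVmx ?mulmx1. Qed.

Lemma twisted_conjE : w *m (invmx w *m Z *m deltaW d w) *m d = Z *m d *m w.
Proof. by rewrite /deltaW -!mulmxA mulVmx // mulmx1 !mulmxA mulmxV // mul1mx. Qed.

Lemma twisted_conj_fixed (v : V) : (invmx w *m Z *m deltaW d w) *m v = v -> d *m v = v ->
  Z *m d *m (w *m v) = w *m v.
Proof.
by move=> Xv dv; rewrite mulmxA -twisted_conjE -[_ *m v]mulmxA dv -mulmxA Xv.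
Qed.

Lemma twisted_conj_invariant (T : Type) (f : V -> T) (u : V) :
  (forall v, f ((invmx w *m Z *m deltaW d w) *m v) = f v) -> (forall v, f (d *m v) = f v) ->
  f (invmx w *m (Z *m d *m (w *m u))) = f u.
Proof.
move=> fX fd; rewrite [Z *m d *m _]mulmxA -twisted_conjE.
by rewrite -[_ *m d *m u]mulmxA -[w *m _ *m _]mulmxA mulKmx // fX fd.
Qed.

End TwistedConjugation.

Theorem lemma4p4p4 (R : realFieldType) (n : nat) (Sigma S : seq 'cV[R]_n)
  (d : 'M[R]_n) (X : zmodType) (actX : 'M[R]_n -> X -> X) (deltaX : X -> X)
  (J J' : seq 'cV[R]_n) (y : X * 'M[R]_n) (alpha : 'cV[R]_n) (w w' : 'M[R]_n) :
  root_system Sigma -> reduced Sigma -> is_base Sigma S ->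
  frob Sigma S d -> iw_data actX deltaX Sigma d ->
  {subset J <= S} -> {subset J' <= S} -> dstable d J -> dstable d J' ->
  weyl Sigma y.2 -> alpha \in Sigma ->
  weyl Sigma w -> weyl Sigma w' ->
  inWtJ J (mulWt actX (mulWt actX (mulWt actX (ofW X (invmx w)) y)
             (deltaWt deltaX d (ofW X (refl alpha)))) (deltaWt deltaX d (ofW X w))) ->
  inWtJ J' (mulWt actX (mulWt actX (ofW X (invmx w')) y)
             (deltaWt deltaX d (ofW X w'))) ->
  rootsJ Sigma J (invmx w *m alpha) \/ rootsJ Sigma J' (invmx w' *m alpha).
Proof.
move=> Sigma_rs _ S_base d_frob _ JS J'S dJ dJ' _ aS Ww Ww' WJ WJ'.
rewrite /inWtJ /= -[invmx w *m y.2 *m _]mulmxA in WJ WJ'.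
have [du _ dS] := d_frob; have [S_uniq _ S_free _] := S_base.
set z := chamber_vec J Sigma_rs S_base.
set f := heightC (base_span Sigma_rs S_base) J'.
have wz_fixed : y.2 *m d *m (refl alpha *m (w *m z)) = w *m z.
  move: (twisted_conj_fixed du (weyl_unit Sigma_rs Ww) (chamber_weyl_fixed Sigma_rs S_base JS WJ)
    (chamber_frob_fixed Sigma_rs S_base d_frob dJ)).
  by rewrite -[_ *m deltaW d _ *m d]mulmxA (deltaW_mulmx du) !mulmxA.
have := twisted_conj_invariant du (weyl_unit Sigma_rs Ww') (f := f)
  (invmx w' *m (refl alpha *m (w *m z)))
  (heightC_weyl S_uniq S_free _ J'S WJ')
  (heightC_perm S_uniq S_free _ du dS (fun a _ => dstable_mem a du dJ')).
rewrite mulKVmx ?(weyl_unit Sigma_rs Ww') // wz_fixed.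
move/esym/(lin_form_refl (heightC_lin S_free _ J') (root_dot_neq0 Sigma_rs aS)).
case=> [orth | height0]; [left | right]; split; try exact: weyl_rootV.
  apply: (root_orth_chamber (S_base := S_base) (weyl_rootV Sigma_rs Ww aS)).
  by rewrite -(weyl_dot Sigma_rs _ _ Ww) mulKVmx ?(weyl_unit Sigma_rs Ww).
exact: root_heightC_eq0 (weyl_rootV Sigma_rs Ww' aS) height0.
Qed.
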